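(* Let $R$ be a valuation ring, $M$ its maximal ideal and $Z$ the set of zero divisors of $R$. Then: (1) $M$ is a flat $R$-module if and only if the annihilator $(0:r)$ is not finitely generated for every $r\in Z\setminus\{0\}$; (2) if $r,s\in R$ satisfy $rs\neq 0$, then $(0:rs)=((0:r):s)$ and $(0:r)=s\,(0:rs)$; moreover, if $(0:r)\neq 0$, then $(0:r)$ is finitely generated if and only if $(0:rs)$ is finitely generated.
   Context: All rings are commutative with identity. A valuation ring is a ring whose ideals are totally ordered by inclusion. For an ideal $A$ and $x\in R$, $(A:x)=\{y\in R: xy\in A\}$ and $(0:x)$ is the annihilator of $x$. *)

From HB Require Import structures.
From mathcomp Require Import all_boot all_order all_algebra.
Set Implicit Arguments. Unset Strict Implicit. Unset Printing Implicit Defensive.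
Import GRing.Theory.
Local Open Scope ring_scope.

(* Subsets of R are Prop-valued predicates (ideals need not be decidable). *)
Definition rset (R : Type) := R -> Prop.

Definition rseteq (R : Type) (A B : rset R) : Prop := forall x, A x <-> B x.
Definition rsubset (R : Type) (A B : rset R) : Prop := forall x, A x -> B x.

Section Ideals.
Variable R : comNzRingType.

Definition is_ideal (I : rset R) : Prop :=
  [/\ I 0, (forall x y, I x -> I y -> I (x + y)) & (forall a x, I x -> I (a * x))].

Definition proper_ideal (I : rset R) : Prop := is_ideal I /\ ~ I 1.

Definition maximal_ideal (M : rset R) : Prop :=
  proper_ideal M /\ (forall J, proper_ideal J -> rsubset M J -> rsubset J M).

Definition valuation_ring : Prop :=
  forall I J : rset R, is_ideal I -> is_ideal J -> rsubset I J \/ rsubset J I.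

Definition colon (A : rset R) (x : R) : rset R := fun y => A (x * y).

Definition zero_ideal : rset R := fun y => y = 0.

Definition ann (x : R) : rset R := colon zero_ideal x.

Definition scale_set (s : R) (A : rset R) : rset R := fun z => exists2 y, A y & z = s * y.

(* zero divisors (including 0): r with r s = 0 for some s <> 0 *)
Definition zero_divisor (r : R) : Prop := exists s, s <> 0 /\ r * s = 0.

Definition fin_gen (I : rset R) : Prop :=
  exists (n : nat) (g : 'I_n -> R),
    forall y, I y <-> exists c : 'I_n -> R, y = \sum_(i < n) c i * g i.

(* B : A x S -> P is R-bilinear (S given as a subset of R; bilinearity is
   only required on arguments in S). *)
Definition bilinear_on (A P : lmodType R) (S : rset R) (B : A -> R -> P) : Prop :=
  (forall x, S x -> forall (c : R) (a1 a2 : A), B (c *: a1 + a2) x = c *: B a1 x + B a2 x)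
  /\ (forall (a : A) (c : R) x1 x2, S x1 -> S x2 ->
        B a (c * x1 + x2) = c *: B a x1 + B a x2).

(* The element \sum_i a_i (x) x_i of the tensor product A (x)_R S is zero,
   characterised via the universal property: every bilinear map kills it. *)
Definition tensor_zero (A : lmodType R) (S : rset R) (k : nat)
    (a : 'I_k -> A) (x : 'I_k -> R) : Prop :=
  forall (P : lmodType R) (B : A -> R -> P), bilinear_on S B ->
    \sum_(i < k) B (a i) (x i) = 0.

(* S (an R-submodule of R) is flat: for every injective R-linear map
   f : N -> N', the induced map N (x) S -> N' (x) S is injective. *)
Definition flat_submodule (S : rset R) : Prop :=
  forall (N N' : lmodType R) (f : {linear N -> N'}), injective f ->
  forall (k : nat) (n : 'I_k -> N) (x : 'I_k -> R), (forall i, S (x i)) ->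
    tensor_zero S (fun i => f (n i)) x -> tensor_zero S n x.

End Ideals.

(* In a valuation ring divisibility is a total preorder, so finitely generated
   ideals are principal and the maximal ideal M is the directed union of its
   principal ideals zR ≅ R/(0:z).  Hence N ⊗ M is the direct limit of the
   N/(0:z)N, z ∈ M, and a pure tensor n ⊗ x vanishes only if x = c z with
   z ∈ M and c n ∈ (0:z)N; any sum of tensors collapses to a pure one since all
   the x_i are multiples of one of them.
   If no annihilator (0:a) of a nonzero zero divisor is principal, such a z
   factors as e z' with e ∈ M and a z' = 0, so the witness c f(n) = a v pulled
   back along an injective f gives c z' n = 0 and n ⊗ x = c z' n ⊗ e = 0: M is
   flat.  Conversely, if (0:r) = tR with t ≠ 0, multiplication by r embeds
   R/(0:r) into R and sends 1 ⊗ t to r ⊗ t = 1 ⊗ rt = 0, while a witness for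
   1 ⊗ t = 0 yields t (1 - b z) = 0 with z ∈ M, hence t = 0.
   Part (2) only compares elements of (0:r) with s by divisibility. *)

From Pilot Require Import Defs.
From HB Require Import structures.
From mathcomp Require Import all_boot all_order all_algebra.
From mathcomp Require Import boolp functions.
Set Implicit Arguments. Unset Strict Implicit. Unset Printing Implicit Defensive.
Import GRing.Theory.
Local Open Scope ring_scope.
Local Open Scope quotient_scope.

Record submodule (R : pzRingType) (V : lmodType R) := Submodule {
  submod_mem :> V -> Prop;
  submod0 : submod_mem 0;
  submodD : forall u v, submod_mem u -> submod_mem v -> submod_mem (u + v);
  submodZ : forall a v, submod_mem v -> submod_mem (a *: v) }.

Section QuotientModule.
Variables (R : pzRingType) (V : lmodType R) (S : submodule V).

Lemma submodN v : S v -> S (- v).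
Proof. by rewrite -scaleN1r; apply: submodZ. Qed.

Definition submod_eqv (u v : V) : bool := `[< S (u - v) >].

Lemma submod_eqv_refl : reflexive submod_eqv.
Proof. by move=> v; apply/asboolP; rewrite subrr; apply: submod0. Qed.

Lemma submod_eqv_sym : symmetric submod_eqv.
Proof.
by move=> u v; apply/asboolP/asboolP => /submodN; rewrite opprB.
Qed.

Lemma submod_eqv_trans : transitive submod_eqv.
Proof.
move=> v u w /asboolP Suv /asboolP Svw; apply/asboolP.
by rewrite -(subrKA v); apply: submodD.
Qed.

Canonical submod_eqv_rel :=
  EquivRel submod_eqv submod_eqv_refl submod_eqv_sym submod_eqv_trans.

Definition quotmod := {eq_quot submod_eqv}.
HB.instance Definition _ := Choice.on quotmod.

Lemma pi_eq u v : \pi_quotmod u = \pi_quotmod v <-> S (u - v).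
Proof. by split=> [/eqmodP/asboolP | Suv]; last exact/eqmodP/asboolP. Qed.

Lemma repr_pi v : S (repr (\pi_quotmod v) - v).
Proof. by apply/pi_eq; rewrite reprK. Qed.

Definition quot_zero : quotmod := \pi_quotmod 0.
Definition quot_add := lift_op2 quotmod +%R.
Definition quot_opp := lift_op1 quotmod -%R.
Definition quot_scale (a : R) := lift_op1 quotmod ( *:%R a).

Lemma quot_addE u v :
  quot_add (\pi_quotmod u) (\pi_quotmod v) = \pi_quotmod (u + v).
Proof.
by unlock quot_add; apply/pi_eq; rewrite opprD addrACA; apply: submodD; apply: repr_pi.
Qed.

Lemma quot_oppE v : quot_opp (\pi_quotmod v) = \pi_quotmod (- v).
Proof. by unlock quot_opp; apply/pi_eq; rewrite -opprD; apply/submodN/repr_pi. Qed.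

Lemma quot_scaleE a v : quot_scale a (\pi_quotmod v) = \pi_quotmod (a *: v).
Proof. by unlock quot_scale; apply/pi_eq; rewrite -scalerBr; apply/submodZ/repr_pi. Qed.

Lemma quot_addA : associative quot_add.
Proof.
move=> p q r; elim/quotW: p => u; elim/quotW: q => v; elim/quotW: r => w.
by rewrite !quot_addE addrA.
Qed.

Lemma quot_addC : commutative quot_add.
Proof.
by move=> p q; elim/quotW: p => u; elim/quotW: q => v; rewrite !quot_addE addrC.
Qed.

Lemma quot_add0 : left_id quot_zero quot_add.
Proof. by move=> q; elim/quotW: q => v; rewrite quot_addE add0r. Qed.

Lemma quot_addN : left_inverse quot_zero quot_opp quot_add.
Proof. by move=> q; elim/quotW: q => v; rewrite quot_oppE quot_addE addNr. Qed.

HB.instance Definition _ :=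
  GRing.isZmodule.Build quotmod quot_addA quot_addC quot_add0 quot_addN.

Lemma piD u v : \pi_quotmod (u + v) = (\pi_quotmod u : quotmod) + \pi_quotmod v.
Proof. exact/esym/quot_addE. Qed.

Lemma quot_scaleA a b q : quot_scale a (quot_scale b q) = quot_scale (a * b) q.
Proof. by elim/quotW: q => v; rewrite !quot_scaleE scalerA. Qed.

Lemma quot_scale1 : left_id 1 quot_scale.
Proof. by move=> q; elim/quotW: q => v; rewrite quot_scaleE scale1r. Qed.

Lemma quot_scaleDr : right_distributive quot_scale +%R.
Proof.
move=> a p q; elim/quotW: p => u; elim/quotW: q => v.
by rewrite -piD !quot_scaleE -piD scalerDr.
Qed.

Lemma quot_scaleDl q : {morph quot_scale^~ q : a b / a + b}.
Proof. by elim/quotW: q => v a b; rewrite !quot_scaleE -piD scalerDl. Qed.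

HB.instance Definition _ := GRing.Zmodule_isLmodule.Build R quotmod
  quot_scaleA quot_scale1 quot_scaleDr quot_scaleDl.

Lemma piZ a v : \pi_quotmod (a *: v) = a *: (\pi_quotmod v : quotmod).
Proof. exact/esym/quot_scaleE. Qed.

Lemma pi_eq0 v : \pi_quotmod v = 0 :> quotmod <-> S v.
Proof. by rewrite pi_eq subr0. Qed.

End QuotientModule.

Section BilinearOn.
Variables (R : comNzRingType) (S : rset R) (A P : lmodType R) (B : A -> R -> P).
Hypothesis B_bilin : bilinear_on S B.

Lemma bilin0l x : S x -> B 0 x = 0.
Proof. by move=> Sx; have := B_bilin.1 x Sx (-1) 0 0; rewrite !scaleN1r !addNr. Qed.

Lemma bilinDl x a1 a2 : S x -> B (a1 + a2) x = B a1 x + B a2 x.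
Proof. by move=> Sx; have := B_bilin.1 x Sx 1 a1 a2; rewrite !scale1r. Qed.

Lemma bilinZl x c a : S x -> B (c *: a) x = c *: B a x.
Proof. by move=> Sx; have := B_bilin.1 x Sx c a 0; rewrite !addr0 bilin0l ?addr0. Qed.

Lemma bilin_suml x k (a : 'I_k -> A) :
  S x -> B (\sum_(i < k) a i) x = \sum_(i < k) B (a i) x.
Proof.
by move=> Sx; apply: (big_morph (B^~ x)) => [a1 a2|]; [exact: bilinDl | exact: bilin0l].
Qed.

Hypothesis S0 : S 0.

Lemma bilin0r a : B a 0 = 0.
Proof. by have := B_bilin.2 a (-1) 0 0 S0 S0; rewrite mulN1r !addNr scaleN1r addNr. Qed.

Lemma bilinZr a c x : S x -> B a (c * x) = c *: B a x.
Proof. by move=> Sx; have := B_bilin.2 a c x 0 Sx S0; rewrite !addr0 bilin0r addr0. Qed.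

End BilinearOn.

Definition pure_tensor_zero (R : comNzRingType) (S : rset R) (A : lmodType R)
    (a : A) (x : R) : Prop :=
  forall (P : lmodType R) (B : A -> R -> P), bilinear_on S B -> B a x = 0.

Section PureTensors.
Variables (R : comNzRingType) (S : rset R) (A : lmodType R).
Hypothesis S0 : S 0.

Lemma tensor_zero1 (a : A) x :
  tensor_zero S (fun _ : 'I_1 => a) (fun _ => x) <-> pure_tensor_zero S a x.
Proof. by split=> H P B /H; rewrite big_ord1. Qed.

Lemma tensor_zero_collapse k (a : 'I_k -> A) (x c : 'I_k -> R) y :
  S y -> (forall i, x i = c i * y) ->
  tensor_zero S a x <-> pure_tensor_zero S (\sum_(i < k) c i *: a i) y.
Proof.
move=> Sy x_c.
have collapse (P : lmodType R) (B : A -> R -> P) : bilinear_on S B ->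
    \sum_(i < k) B (a i) (x i) = B (\sum_(i < k) c i *: a i) y.
  move=> B_bilin; rewrite (bilin_suml B_bilin) //; apply: eq_bigr => i _.
  by rewrite x_c (bilinZr B_bilin) // (bilinZl B_bilin).
split=> H P B B_bilin; first by rewrite -(collapse P B B_bilin); exact: H.
by rewrite (collapse P B B_bilin); exact: H.
Qed.

Lemma pure_tensor_zero_scale (a : A) c w :
  S w -> c *: a = 0 -> pure_tensor_zero S a (c * w).
Proof.
move=> Sw ca0 P B B_bilin.
by rewrite (bilinZr B_bilin) // -(bilinZl B_bilin) // ca0 (bilin0l B_bilin).
Qed.

End PureTensors.

Lemma regular_pure_tensor_zero (R : comNzRingType) (S : rset R) (a x : R) :
  S 0 -> S x -> a * x = 0 -> pure_tensor_zero S (a : R^o) x.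
Proof.
move=> S0 Sx ax0 P B B_bilin.
have -> : a = a *: (1 : R^o) by rewrite /GRing.scale /= mulr1.
by rewrite (bilinZl B_bilin) // -(bilinZr B_bilin) // ax0 (bilin0r B_bilin).
Qed.

Section Divisibility.
Variable R : comNzRingType.
Implicit Types (a b c r s t : R) (I : rset R).

Definition divides a b : Prop := exists d, b = d * a.

Definition principal I : Prop := exists t, rseteq I (divides t).

Lemma divides_refl a : divides a a.
Proof. by exists 1; rewrite mul1r. Qed.

Lemma divides_trans a b c : divides a b -> divides b c -> divides a c.
Proof. by move=> [d ->] [e ->]; exists (e * d); rewrite mulrA. Qed.

Lemma divides_ideal a : is_ideal (divides a).
Proof.
split; first by exists 0; rewrite mul0r.
  by move=> _ _ [d ->] [e ->]; exists (d + e); rewrite mulrDl.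
by move=> b _ [d ->]; exists (b * d); rewrite mulrA.
Qed.

Lemma divides0 a : divides 0 a <-> a = 0.
Proof. by split=> [[d ->]|->]; [rewrite mulr0 | exact: divides_refl]. Qed.

Lemma ideal0 I : is_ideal I -> I 0.
Proof. by case. Qed.

Lemma idealD I : is_ideal I -> forall x y, I x -> I y -> I (x + y).
Proof. by case. Qed.

Lemma idealM I : is_ideal I -> forall a x, I x -> I (a * x).
Proof. by case. Qed.

Lemma ideal_divides I t : is_ideal I -> I t -> forall y, divides t y -> I y.
Proof. by move=> I_ideal It _ [d ->]; apply: idealM. Qed.

Lemma ann_ideal r : is_ideal (ann r).
Proof.
rewrite /ann /colon /zero_ideal; split; first by rewrite mulr0.
  by move=> x y rx ry; rewrite mulrDr rx ry addr0.
by move=> a x rx; rewrite mulrCA rx mulr0.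
Qed.

Lemma ann_mul_colon r s : rseteq (ann (r * s)) (colon (ann r) s).
Proof. by move=> y; rewrite /ann /colon mulrA. Qed.

(* The exact quotient y / t, with junk value 0 when t does not divide y. *)
Definition exquo y t : R :=
  if pselect (divides t y) is left t_y then projT1 (cid t_y) else 0.

Lemma exquoP y t : divides t y -> y = exquo y t * t.
Proof. by rewrite /exquo; case: pselect => // t_y _; exact: (projT2 (cid t_y)). Qed.

Definition ideal_submodule I (I_ideal : is_ideal I) : submodule R^o :=
  @Submodule R R^o I (ideal0 I_ideal) (idealD I_ideal) (idealM I_ideal).

Section MulAnnQuotient.
Variable r : R.

Definition ann_quot := quotmod (ideal_submodule (ann_ideal r)).

Definition mul_ann_quot (q : ann_quot) : R^o := r * repr q.

Lemma mul_ann_quotE v : mul_ann_quot (\pi v) = r * v.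
Proof.
apply/eqP; rewrite -subr_eq0 -mulrBr; apply/eqP.
exact: (repr_pi (ideal_submodule (ann_ideal r)) v).
Qed.

Lemma mul_ann_quot_linear : linear mul_ann_quot.
Proof.
move=> a p q; elim/quotW: p => u; elim/quotW: q => v.
by rewrite -piZ -piD !mul_ann_quotE mulrDr mulrCA.
Qed.

Lemma mul_ann_quot_inj : injective mul_ann_quot.
Proof.
move=> p q; elim/quotW: p => u; elim/quotW: q => v; rewrite !mul_ann_quotE => ruv.
by apply/pi_eq; rewrite /= /ann /colon /zero_ideal mulrBr ruv subrr.
Qed.

End MulAnnQuotient.
End Divisibility.

Arguments mul_ann_quot {R} r q.

HB.instance Definition _ (R : comNzRingType) (r : R) :=
  GRing.isLinear.Build R (ann_quot r) R^o *:%R (@mul_ann_quot R r)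
    (@mul_ann_quot_linear R r).

Section Valuation.
Variable R : comNzRingType.
Implicit Types (a b c r s t : R) (I : rset R).
Hypothesis R_val : valuation_ring R.

Lemma divides_total a b : divides a b \/ divides b a.
Proof.
by case: (R_val (divides_ideal a) (divides_ideal b)) => sub;
  [right | left]; apply: sub; apply: divides_refl.
Qed.

Lemma divides_min n (g : 'I_n.+1 -> R) : exists j, forall i, divides (g j) (g i).
Proof.
elim: n g => [|n IHn] g.
  by exists ord0 => i; rewrite [i]fintype.ord1; apply: divides_refl.
have [j gj_min] := IHn (g \o lift ord0).
have [g0_gj | gj_g0] := divides_total (g ord0) (g (lift ord0 j)).
  exists ord0 => i; case: (unliftP ord0 i) => [k ->|->]; last exact: divides_refl.
  exact: divides_trans g0_gj (gj_min k).
exists (lift ord0 j) => i.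
by case: (unliftP ord0 i) => [k ->|->]; [exact: gj_min | exact: gj_g0].
Qed.

Lemma fin_gen_principal I : fin_gen I <-> principal I.
Proof.
split=> [[n [g I_g]] | [t I_t]]; last first.
  exists 1%N, (fun _ => t) => y; split=> [/I_t [d ->] | [c ->]].
    by exists (fun _ => d); rewrite big_ord1.
  by apply/I_t; exists (c ord0); rewrite big_ord1.
case: n g I_g => [|n] g I_g.
  exists 0 => y; split=> [/I_g [c ->] | /divides0 ->].
    by rewrite big_ord0; apply: divides_refl.
  by apply/I_g; exists (fun=> 0); rewrite big_ord0.
have [j gj_min] := divides_min g.
have [gj_0 gj_D gj_M] := divides_ideal (g j).
exists (g j) => y; split=> [/I_g [c ->] | [d ->]].
  apply: (big_ind (divides (g j))) => [||i _]; [exact: gj_0 | exact: gj_D |].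
  exact/gj_M/gj_min.
apply/I_g; exists (fun i => if i == j then d else 0).
by rewrite (bigD1 j) //= eqxx big1 ?addr0 // => i /negbTE ->; rewrite mul0r.
Qed.

Lemma ann_scale_set r s :
  r * s <> 0 -> rseteq (ann r) (scale_set s (ann (r * s))).
Proof.
move=> rs0 y; split=> [ry | [z rsz ->]]; last by rewrite /ann /colon mulrA.
have [[d y_ds] | [d sdy]] := divides_total s y.
  exists d; last by rewrite y_ds mulrC.
  by rewrite /ann /colon /zero_ideal -mulrA [s * d]mulrC -y_ds.
by case: rs0; rewrite sdy mulrCA ry mulr0.
Qed.

Lemma principal_ann_mul r s : r * s <> 0 -> ~ rseteq (ann r) (@zero_ideal R) ->
  principal (ann r) <-> principal (ann (r * s)).
Proof.
move=> rs0 ann_r_neq0; have ann_rs := ann_scale_set rs0.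
split=> [[t ann_r_t] | [y ann_rs_y]]; last first.
  have r_sy : ann r (s * y).
    by apply/ann_rs; exists y => //; apply/ann_rs_y/divides_refl.
  exists (s * y) => z; split; last exact: ideal_divides (ann_ideal r) r_sy z.
  by move=> /ann_rs [_ /ann_rs_y [d ->] ->]; exists d; rewrite mulrCA.
have [y rs_y t_sy] := (ann_rs t).1 ((ann_r_t t).2 (divides_refl t)).
exists y => z; split=> [rs_z | ]; last exact: ideal_divides (ann_ideal _) rs_y z.
have [d sz_dt] := (ann_r_t (s * z)).1 ((ann_mul_colon r s z).1 rs_z).
have [[e zdy] | [e y_e]] := divides_total y (z - d * y).
  by exists (e + d); rewrite mulrDl -zdy subrK.
have t0 : t = 0.
  rewrite t_sy y_e mulrCA mulrBr sz_dt t_sy [d * (s * y)]mulrCA.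
  by rewrite subrr mulr0.
by case: ann_r_neq0 => x; rewrite /zero_ideal -(divides0 x) -t0; exact: ann_r_t.
Qed.

Section LocalRing.
Variable M : rset R.
Hypothesis M_max : maximal_ideal M.

Let M_ideal : is_ideal M := M_max.1.1.
Let M0 : M 0 := ideal0 M_ideal.

Lemma notin_maximal_unit a : ~ M a -> exists u, a * u = 1.
Proof.
move=> Ma; apply: contrapT => a_nonunit; apply: Ma.
have aR_proper : Defs.proper_ideal (divides a).
  split; first exact: divides_ideal.
  by move=> [u u_a]; apply: a_nonunit; exists u; rewrite mulrC -u_a.
have [M_aR | aR_M] := R_val M_ideal (divides_ideal a); last exact/aR_M/divides_refl.
exact: M_max.2 _ aR_proper M_aR _ (divides_refl a).
Qed.

Lemma maximal_mul1D_eq0 m t : M m -> t * (1 + m) = 0 -> t = 0.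
Proof.
move=> Mm t1m0; have [u u_1m] : exists u, (1 + m) * u = 1.
  apply: notin_maximal_unit => M1m; apply: M_max.1.2.
  by have := idealD M_ideal M1m (idealM M_ideal (-1) Mm); rewrite mulN1r addrK.
by rewrite -[t]mulr1 -u_1m mulrA t1m0 mul0r.
Qed.

Lemma not_principal_factor I z : is_ideal I -> ~ principal I -> I z ->
  exists e z', [/\ M e, I z' & z = e * z'].
Proof.
move=> I_ideal I_npr Iz.
have [[y [Iy z_ndvd_y]] | z_dvd_all] := pselect (exists y, I y /\ ~ divides z y).
  have [//| [e z_ey]] := divides_total z y.
  exists e, y; split=> //; apply: contrapT => /notin_maximal_unit [u eu].
  by apply: z_ndvd_y; exists u; rewrite z_ey mulrA [u * e]mulrC eu mul1r.
case: I_npr; exists z => y; split; last exact: ideal_divides I_ideal Iz y.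
by move=> Iy; apply: contrapT => z_ndvd_y; apply: z_dvd_all; exists y.
Qed.

Section Probe.
Variable N : lmodType R.

(* [ann_smul z n] says n ∈ (0:z)N, whose elements are single products a v
   because (0:z) is a chain for divisibility. *)
Definition ann_smul z (n : N) : Prop := exists a v, a * z = 0 /\ n = a *: v.

Lemma ann_smul0 z : ann_smul z 0.
Proof. by exists 0, 0; rewrite mul0r scale0r. Qed.

Lemma ann_smulD z u v : ann_smul z u -> ann_smul z v -> ann_smul z (u + v).
Proof.
move=> [a [u' [az0 ->]]] [b [v' [bz0 ->]]].
have [[d ->] | [d ->]] := divides_total a b.
  by exists a, (u' + d *: v'); split=> //; rewrite scalerDr scalerA mulrC.
by exists b, (d *: u' + v'); split=> //; rewrite scalerDr scalerA mulrC.
Qed.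

Lemma ann_smulZ z c v : ann_smul z v -> ann_smul z (c *: v).
Proof.
by move=> [a [u [az0 ->]]]; exists a, (c *: u); split=> //; rewrite !scalerA mulrC.
Qed.

(* The direct limit of the N/(0:z)N is realized as the functions R -> N modulo
   those that lie in (0:z)N for all z ∈ M dividing some w ∈ M; [probe n y] is
   the class of z |-> (y/z) n, the image of n ⊗ y. *)
Definition eventually_ann (g : R -> N) : Prop :=
  exists2 w, M w & forall z, M z -> divides z w -> ann_smul z (g z).

Lemma eventually_ann0 : eventually_ann 0.
Proof. by exists 0 => [|z _ _]; [exact: M0 | exact: ann_smul0]. Qed.

Lemma eventually_annD g h :
  eventually_ann g -> eventually_ann h -> eventually_ann (g + h).
Proof.
move=> [v Mv g_ann] [w Mw h_ann].
have [v_w | w_v] := divides_total v w.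
  exists v => // z Mz z_v; apply: ann_smulD; first exact: g_ann.
  exact: h_ann (divides_trans z_v v_w).
exists w => // z Mz z_w; apply: ann_smulD; last exact: h_ann.
exact: g_ann (divides_trans z_w w_v).
Qed.

Lemma eventually_annZ c g : eventually_ann g -> eventually_ann (c *: g).
Proof. by move=> [w Mw g_ann]; exists w => // z Mz z_w; apply/ann_smulZ/g_ann. Qed.

Definition eventually_ann_submod :=
  Submodule eventually_ann0 eventually_annD eventually_annZ.

Definition probe (n : N) (y : R) : quotmod eventually_ann_submod :=
  \pi_(quotmod eventually_ann_submod) (fun z => exquo y z *: n).

Lemma probe_bilinear : bilinear_on M probe.
Proof.
split=> [x Mx c n1 n2 | n c x1 x2 Mx1 Mx2].
  rewrite /probe -piZ -piD; congr \pi; apply: funext => z.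
  by rewrite !fctE scalerDr !scalerA mulrC.
rewrite /probe -piZ -piD; apply/pi_eq.
have [w Mw [w_x1 w_x2]] : exists2 w, M w & divides w x1 /\ divides w x2.
  have [x1_x2 | x2_x1] := divides_total x1 x2; [exists x1 | exists x2] => //;
    by split=> //; apply: divides_refl.
exists w => // z Mz z_w.
have z_x1 := divides_trans z_w w_x1; have z_x2 := divides_trans z_w w_x2.
have [_ z_D z_M] := divides_ideal z.
have z_x := z_D _ _ (z_M c _ z_x1) z_x2.
exists (exquo (c * x1 + x2) z - (c * exquo x1 z + exquo x2 z)), n; split.
  by rewrite mulrBl -exquoP // mulrDl -mulrA -!exquoP // subrr.
by rewrite !fctE scalerBl scalerDl scalerA.
Qed.

Lemma pure_tensor_zero_witness (n : N) x : M x -> pure_tensor_zero M n x ->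
  exists z c, [/\ M z, x = c * z & ann_smul z (c *: n)].
Proof.
move=> Mx /(_ _ probe probe_bilinear) /pi_eq0 [w Mw probe_ann].
have [x_w | w_x] := divides_total x w.
  exists x, (exquo x x); split=> //; last exact: probe_ann.
  exact/exquoP/divides_refl.
exists w, (exquo x w); split=> //; first exact: exquoP.
exact: probe_ann (divides_refl w).
Qed.

Hypothesis ann_not_principal :
  forall a, zero_divisor a -> a <> 0 -> ~ principal (ann a).

Lemma ann_smul_factor z (u : N) : M z -> ann_smul z u ->
  exists d e, [/\ M e, z = d * e & d *: u = 0].
Proof.
move=> Mz [a [v [az0 ->]]].
have [-> | a0] := pselect (a = 0).
  by exists 1, z; rewrite mul1r scale0r scaler0.
have [-> | z0] := pselect (z = 0).
  by exists 0, 0; rewrite mul0r scale0r; split=> //; exact: M0.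
have a_zd : zero_divisor a by exists z.
have [e [z' [Me az'0 z_ez']]] :=
  not_principal_factor (ann_ideal a) (ann_not_principal a_zd a0) az0.
exists z', e; split=> //; first by rewrite z_ez' mulrC.
by rewrite scalerA mulrC (az'0 : a * z' = 0) scale0r.
Qed.

End Probe.

Lemma flat_of_ann_not_principal :
  (forall a, zero_divisor a -> a <> 0 -> ~ principal (ann a)) -> flat_submodule M.
Proof.
move=> ann_npr N N' f f_inj [|k] n x Mx fn_x0.
  by move=> P B _; rewrite big_ord0.
have [j xj_min] := divides_min x.
have x_xj i : x i = exquo (x i) (x j) * x j := exquoP (xj_min i).
apply/(tensor_zero_collapse M0 _ (Mx j) x_xj).
set m := \sum_(i < k.+1) _.
have fm_x0 : pure_tensor_zero M (f m) (x j).
  rewrite linear_sum; under eq_bigr do rewrite linearZ.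
  exact/(tensor_zero_collapse M0 _ (Mx j) x_xj).
have [z [c [Mz xj_cz z_cfm]]] := pure_tensor_zero_witness (Mx j) fm_x0.
have [d [e [Me z_de dcfm0]]] := ann_smul_factor ann_npr Mz z_cfm.
have dcm0 : (d * c) *: m = 0.
  by apply: f_inj; rewrite linear0 -scalerA !linearZ.
rewrite xj_cz z_de mulrA [c * d]mulrC.
exact: (pure_tensor_zero_scale M0 Me dcm0).
Qed.

Lemma ann_quot_tensor_eq0 r t : rseteq (ann r) (divides t) -> M t ->
  pure_tensor_zero M (\pi 1 : ann_quot r) t -> t = 0.
Proof.
move=> ann_r_t Mt /(pure_tensor_zero_witness Mt) [z [c [Mz t_cz [a [v [az0]]]]]].
elim/quotW: v => v; rewrite -!piZ => /pi_eq /ann_r_t [b c_av_bt].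
have c_eq : c = b * t + a * v by rewrite -c_av_bt subrK /GRing.scale /= mulr1.
have t_tbz : t = t * (b * z).
  rewrite {1}t_cz c_eq mulrDl [a * v * z]mulrAC az0 mul0r addr0.
  by rewrite [b * t * z]mulrAC mulrC.
apply: (maximal_mul1D_eq0 (idealM M_ideal (- b) Mz)).
by rewrite mulrDr mulr1 mulNr mulrN -t_tbz subrr.
Qed.

Lemma ann_not_principal_of_flat :
  flat_submodule M -> forall r, zero_divisor r -> r <> 0 -> ~ principal (ann r).
Proof.
move=> flatM r [s [s0 rs0]] r0 [t ann_r_t].
have rt0 : r * t = 0 := (ann_r_t t).2 (divides_refl t).
have Mt : M t.
  apply: contrapT => /notin_maximal_unit [u tu]; apply: r0.
  by rewrite -[r]mulr1 -tu mulrA rt0 mul0r.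
have /(ann_quot_tensor_eq0 ann_r_t Mt) t0 : pure_tensor_zero M (\pi 1 : ann_quot r) t.
  apply/tensor_zero1/(flatM _ _ (mul_ann_quot r) (mul_ann_quot_inj (r := r))) => //.
  apply/tensor_zero1 => P B B_bilin /=; rewrite mul_ann_quotE mulr1.
  exact: (regular_pure_tensor_zero M0 Mt rt0 B_bilin).
by apply/s0/divides0; rewrite -t0; apply/ann_r_t.
Qed.

Lemma flat_maximal_ideal_iff :
  flat_submodule M <-> (forall r, zero_divisor r -> r <> 0 -> ~ fin_gen (ann r)).
Proof.
split=> [flatM r r_zd r0 | ann_nfg].
  by rewrite fin_gen_principal; exact: ann_not_principal_of_flat.
apply: flat_of_ann_not_principal => r r_zd r0.
by rewrite -fin_gen_principal; exact: ann_nfg.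
Qed.

End LocalRing.
End Valuation.

Theorem proposition2p10 (R : comNzRingType) (M : rset R) :
  valuation_ring R -> maximal_ideal M ->
  (flat_submodule M <->
     (forall r : R, zero_divisor r -> r <> 0 -> ~ fin_gen (ann r)))
  /\
  (forall r s : R, r * s <> 0 ->
     rseteq (ann (r * s)) (colon (ann r) s)
     /\ rseteq (ann r) (scale_set s (ann (r * s)))
     /\ (~ rseteq (ann r) (@zero_ideal R) ->
           (fin_gen (ann r) <-> fin_gen (ann (r * s))))).
Proof.
move=> R_val M_max; split; first exact: flat_maximal_ideal_iff.
move=> r s rs0; split; first exact: ann_mul_colon.
split; first exact: ann_scale_set.
by move=> ann_r_neq0; rewrite !fin_gen_principal //; exact: principal_ann_mul.
Qed.
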